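(* Let $n$ be a positive integer and let $G$ be a pure $(2n)$-sparse gapset of genus $g=3n+1$ with multiplicity $m$. If $G$ is symmetric, then $m=2n$.
   Context: A gapset is a finite set $G\subset\mathbb{N}=\{1,2,\dots\}$ such that whenever $z\in G$ and $z=x+y$ with $x,y\in\mathbb{N}$, then $x\in G$ or $y\in G$; its genus is $g=\#G$. Writing $G=\{\ell_1<\dots<\ell_g\}$, multiplicity $m(G)=\min\{s\in\mathbb{N}:s\notin G\}$, Frobenius number $F(G)=\ell_g$; $G$ is symmetric if $F(G)=2g-1$. $G$ is pure $\kappa$-sparse if $\ell_{i+1}-\ell_i\le\kappa$ for all $i$ with equality for some $i$. *)

From mathcomp Require Import all_boot.
Set Implicit Arguments. Unset Strict Implicit. Unset Printing Implicit Defensive.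

Definition is_gapset (G : seq nat) : Prop :=
  uniq G /\ (forall z, z \in G -> 0 < z) /\
  (forall z x y, z \in G -> 0 < x -> 0 < y -> z = x + y -> x \in G \/ y \in G).

Definition genus (G : seq nat) : nat := size G.

(* sorted elements ell_1 < ... < ell_g, 0-indexed: ell i = nth 0 (sort leq G) i *)
Definition ell (G : seq nat) (i : nat) : nat := nth 0 (sort leq G) i.

Definition frobenius (G : seq nat) : nat := \max_(x <- G) x.

Lemma ex_nongap (G : seq nat) : exists s, (0 < s) && (s \notin G).
Proof.
exists (\max_(x <- G) x).+1; apply/andP; split => //.
apply/negP => h.
have := @leq_bigmax_seq nat G (fun _ => true) (fun x => x) _ h isT.
by rewrite ltnn.
Qed.

Definition multiplicity (G : seq nat) : nat := ex_minn (ex_nongap G).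

Definition symmetric_gapset (G : seq nat) : Prop := frobenius G = 2 * genus G - 1.

Definition pure_sparse (kappa : nat) (G : seq nat) : Prop :=
  (forall i, i.+1 < genus G -> ell G i.+1 - ell G i <= kappa) /\
  (exists i, i.+1 < genus G /\ ell G i.+1 - ell G i = kappa).

From mathcomp Require Import all_boot.
From mathcomp Require Import zify.

Set Implicit Arguments.
Unset Strict Implicit.

(* Two facts about gapsets give the two inequalities.  Since [m] is not a gap,
   every gap [b > m] has [b - m] as a gap, so consecutive gaps are never more
   than [m] apart; pure [2n]-sparseness therefore forces [m >= 2n].
   Conversely, the pairs [{x, F - x}] with [x <= F/2] are disjoint and each
   contains a gap, so a gapset with [F = 2g - 1] cannot contain both members
   of a pair.  If [m > 2n], the gap [y] preceding [F] satisfies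
   [F - y <= 2n < m], so [F - y] is a gap as well: a contradiction. *)

Section SortedGaps.

Variable G : seq nat.
Hypothesis uniqG : uniq G.

Lemma ell_mem i : i < size G -> ell G i \in G.
Proof. by move=> ltiG; rewrite /ell -(mem_sort leq) mem_nth // size_sort. Qed.

Lemma ell_index z : z \in G -> exists2 i, i < size G & ell G i = z.
Proof.
move=> zG; exists (index z (sort leq G)).
  by rewrite -(size_sort leq) index_mem mem_sort.
by rewrite /ell nth_index // mem_sort.
Qed.

Lemma ell_increasing i j : i < j -> j < size G -> ell G i < ell G j.
Proof.
move=> ltij ltjG; have sorted_lt : sorted ltn (sort leq G).
  by rewrite ltn_sorted_uniq_leq sort_uniq uniqG sort_sorted //; exact: leq_total.
apply: (sorted_ltn_nth ltn_trans 0 sorted_lt) => //;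
  rewrite inE size_sort //; exact: ltn_trans ltjG.
Qed.

Lemma ltn_ell i j : i < size G -> j < size G -> (ell G i < ell G j) = (i < j).
Proof.
move=> ltiG ltjG; apply/idP/idP => [lt_ell|/ell_increasing]; last exact.
case: (ltngtP i j) lt_ell => // [/ell_increasing /(_ ltiG) | ->]; lia.
Qed.

Lemma notin_between_ell i x :
  i.+1 < size G -> ell G i < x < ell G i.+1 -> x \notin G.
Proof.
move=> ltiG /andP [ltix ltxi]; apply/negP => /ell_index [j ltjG ellj].
rewrite -ellj in ltix ltxi.
rewrite ltn_ell // in ltix; last exact: ltnW.
by rewrite ltn_ell // in ltxi; lia.
Qed.

Lemma prev_gap_within (kappa z : nat) :
  (forall i, i.+1 < size G -> ell G i.+1 - ell G i <= kappa) ->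
  z \in G -> (exists2 w, w \in G & w < z) ->
  exists2 y, y \in G & z - kappa <= y < z.
Proof.
move=> sparse zG [w wG ltwz].
have [[|k] ltkG ellk] := ell_index zG.
  have [j ltjG ellj] := ell_index wG.
  by have := ltn_ell ltjG ltkG; rewrite ellj ellk ltwz.
exists (ell G k); first by apply: ell_mem; exact: ltnW.
have := sparse k ltkG; have := ell_increasing (ltnSn k) ltkG; rewrite ellk; lia.
Qed.

End SortedGaps.

Lemma frobenius_mem G : G != [::] -> frobenius G \in G.
Proof.
rewrite /frobenius; elim: G => // a s IH _; rewrite big_cons.
case: s IH => [|b s] IH; first by rewrite big_nil maxn0 mem_head.
by rewrite /maxn; case: ifP => _; rewrite ?mem_head // inE IH ?orbT.
Qed.

Lemma multiplicityP G :
  [/\ 0 < multiplicity G, multiplicity G \notin G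
    & forall k, 0 < k -> k < multiplicity G -> k \in G].
Proof.
rewrite /multiplicity; case: ex_minnP => m /andP [m_gt0 mG] min_m.
split=> // k k_gt0 ltkm; apply/negPn/negP => kG.
by have := min_m k; rewrite k_gt0 kG => /(_ isT); lia.
Qed.

Section Gapset.

Variable G : seq nat.
Hypothesis gapsetG : is_gapset G.

Lemma gapset_split z x : z \in G -> 0 < x < z -> x \in G \/ z - x \in G.
Proof.
case: gapsetG => _ [_ splitG] zG /andP [x_gt0 ltxz].
by apply: splitG zG x_gt0 _ _; lia.
Qed.

Lemma ell_diff_le_multiplicity i :
  i.+1 < size G -> ell G i.+1 - ell G i <= multiplicity G.
Proof.
move=> ltiG; have [uniqG _] := gapsetG.
have [m_gt0 mG _] := multiplicityP G.
rewrite leqNgt; apply/negP => lt_m_diff.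
have bG : ell G i.+1 \in G by exact: ell_mem.
have := gapset_split (x := ell G i.+1 - multiplicity G) bG.
have -> : ell G i.+1 - (ell G i.+1 - multiplicity G) = multiplicity G by lia.
rewrite (negPf mG) (negPf (notin_between_ell uniqG ltiG _)); last by lia.
by case=> //; lia.
Qed.

(* Choosing the larger member of each pair [{x, z - x}] that is a gap yields
   [z./2 + 1] distinct gaps, and a small gap [x] whose partner [z - x] is
   also a gap is one more. *)
Lemma size_gt_double_pair z x :
  z \in G -> x \in G -> z - x \in G -> x.*2 < z -> z./2.+1 < size G.
Proof.
move=> zG xG zxG ltxz; have [uniqG [posG _]] := gapsetG.
have x_gt0 := posG x xG.
pose pick y := if z - y \in G then z - y else y.
have pickG y : y <= z./2 -> pick y \in G.
  move=> leyz; rewrite /pick; case: ifP => // zyG.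
  have [y0 | y_gt0] := posnP y; first by rewrite y0 subn0 zG in zyG.
  by case: (gapset_split (x := y) zG) => //; [lia | rewrite zyG].
have pick_inj : {in iota 0 z./2.+1 &, injective pick}.
  move=> y y'; rewrite !mem_iota /= !add0n => ltyz ltyz'.
  by rewrite /pick; do 2 case: ifP => _; lia.
have x_notin_pick : x \notin map pick (iota 0 z./2.+1).
  apply/mapP => -[y]; rewrite mem_iota add0n /pick => /andP [_ ltyz].
  by case: ifP => [_ | zyG xy]; [lia | rewrite -xy zxG in zyG].
have : size (x :: map pick (iota 0 z./2.+1)) <= size G.
  apply: uniq_leq_size.
    by rewrite cons_uniq x_notin_pick (map_inj_in_uniq pick_inj) iota_uniq.
  move=> w; rewrite inE => /predU1P [-> // | /mapP [y]].
  by rewrite mem_iota add0n => /andP [_ ltyz] ->; apply: pickG.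
by rewrite /= size_map size_iota.
Qed.

Lemma symmetric_gapset_pair_notin x :
  symmetric_gapset G -> x \in G -> x.*2 < frobenius G ->
  frobenius G - x \notin G.
Proof.
rewrite /symmetric_gapset /genus => symG xG ltxF.
have FG : frobenius G \in G by apply: frobenius_mem; apply: contraTneq xG => ->.
by apply/negP => FxG; have := size_gt_double_pair FG xG FxG ltxF; lia.
Qed.

End Gapset.

Theorem mainTheorem11 (n : nat) (G : seq nat) :
  0 < n -> is_gapset G -> pure_sparse (2 * n) G -> genus G = 3 * n + 1 ->
  symmetric_gapset G -> multiplicity G = 2 * n.
Proof.
move=> n_gt0 gapsetG [sparse [i [ltiG diff_i]]] genusG symG.
have [uniqG _] := gapsetG.
have [_ _ low_gaps] := multiplicityP G.
have := ell_diff_le_multiplicity gapsetG ltiG; rewrite diff_i.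
rewrite leq_eqVlt => /predU1P [// | lt_2n_m]; exfalso.
have frobG : frobenius G = 6 * n + 1.
  by move: symG; rewrite /symmetric_gapset genusG; lia.
have oneG : 1 \in G by apply: low_gaps; lia.
have FG : frobenius G \in G by apply: frobenius_mem; apply: contraTneq oneG => ->.
have [y yG /andP [le_y lt_y]] :
    exists2 y, y \in G & frobenius G - 2 * n <= y < frobenius G.
  by apply: (prev_gap_within uniqG sparse FG); exists 1 => //; lia.
have Fy_gap : frobenius G - y \in G by apply: low_gaps; lia.
have small_Fy : (frobenius G - y).*2 < frobenius G by lia.
have := symmetric_gapset_pair_notin gapsetG symG Fy_gap small_Fy.
have -> : frobenius G - (frobenius G - y) = y by lia.
by rewrite yG.
Qed.
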